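(* Let $G$ be a finite abelian group and $x,y\in G$ with $[x]_{\mathtt{N}}\neq\mathcal{S}$. Then $x\mathtt{N}y$ if and only if $\langle x\rangle=\langle y\rangle$.
   Context: The power graph $\mathcal{P}(G)$ has vertex set $G$, and distinct $x,y$ are adjacent iff one is a positive integer power of the other. $x\mathtt{N}y$ iff $x$ and $y$ have the same closed neighbourhood in $\mathcal{P}(G)$; $[x]_{\mathtt{N}}$ is the class of $x$. $\mathcal{S}=[1]_{\mathtt{N}}$ is the set of vertices adjacent to all others. *)

From mathcomp Require Import all_boot all_fingroup.
Set Implicit Arguments. Unset Strict Implicit. Unset Printing Implicit Defensive.
Local Open Scope group_scope.

(* The power graph P(G) of a group G (vertex set G):
   distinct x, y are adjacent iff one is a positive integer power of the other. *)
Definition is_pos_power (gT : finGroupType) (x y : gT) : Prop :=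
  exists k : nat, (0 < k)%N /\ y = x ^+ k.

Definition pg_adj (gT : finGroupType) (x y : gT) : Prop :=
  x <> y /\ (is_pos_power x y \/ is_pos_power y x).

Definition pg_cnbhd (gT : finGroupType) (G : {group gT}) (x z : gT) : Prop :=
  z \in G /\ (z = x \/ pg_adj x z).

Definition relN (gT : finGroupType) (G : {group gT}) (x y : gT) : Prop :=
  forall z, pg_cnbhd G x z <-> pg_cnbhd G y z.

Definition pg_classN (gT : finGroupType) (G : {group gT}) (x : gT) : gT -> Prop :=
  fun y => y \in G /\ relN G x y.

Definition pg_classS (gT : finGroupType) (G : {group gT}) : gT -> Prop :=
  pg_classN G 1.

(* Suppose x N y with <[y]> a proper subgroup of <[x]>; we show that every
   z in G is a power of x or has x as a power, i.e. x lies in S.  By induction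
   on the order of z, with q the least prime divisor of #[z]: z ^+ q is
   comparable with x, hence with y, and we may assume z is not comparable
   with y, so z ^+ q lies in <[y]>.  Pick u in <[x]> with y in <[u ^+ q]> but
   x not in it (u = x when q divides #[x], because <[x ^+ q]> is maximal in
   <[x]> and x ^+ q is comparable with y; u = y otherwise).  Writing
   z ^+ q = u ^+ (q * t), the element c = z * u ^- t has c ^+ q = 1, and c
   lies in <[x]>: otherwise y lies in <[(c * u) ^+ q]> = <[u ^+ q]>, so c * u
   is comparable with x, which forces c in <[x]> or x in <[u ^+ q]>.  Hence
   z = c * u ^+ t lies in <[x]>. *)

From mathcomp Require Import all_boot all_fingroup.
From mathcomp Require Import cyclic gseries maximal.
From Corelib Require Import Setoid.
Set Implicit Arguments. Unset Strict Implicit. Unset Printing Implicit Defensive.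
Local Open Scope group_scope.

Section PowerGraph.
Variable gT : finGroupType.
Implicit Types (G : {group gT}) (a x y z : gT).

Definition power_comparable x z := (z \in <[x]>) || (x \in <[z]>).

Lemma power_comparable1 z : power_comparable 1 z.
Proof. by rewrite /power_comparable group1 orbT. Qed.

Lemma power_comparable_cycle x y :
  <[x]> = <[y]> -> power_comparable x =1 power_comparable y.
Proof.
by move=> eq_xy z; rewrite /power_comparable -!cycle_subG /= eq_xy.
Qed.

Lemma is_pos_powerE x z : is_pos_power x z <-> z \in <[x]>.
Proof.
split=> [[k [_ ->]] | /cycleP[[|k] ->]].
- exact: mem_cycle.
- by exists #[x]; rewrite order_gt0 expg_order.
- by exists k.+1.
Qed.

Lemma pg_cnbhdE G x z : pg_cnbhd G x z <-> (z \in G) && power_comparable x z.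
Proof.
rewrite /pg_cnbhd /pg_adj /power_comparable; split.
  by case=> -> [-> | [_ [/is_pos_powerE -> | /is_pos_powerE ->]]];
    rewrite ?cycle_id ?orbT.
case/andP=> -> zx; split=> //; have [-> | ne_zx] := eqVneq z x; first by left.
right; split; first by apply/eqP; rewrite eq_sym.
by case/orP: zx => /is_pos_powerE; [left | right].
Qed.

Lemma relNE G x y :
  relN G x y <-> {in G, power_comparable x =1 power_comparable y}.
Proof.
rewrite /relN; setoid_rewrite pg_cnbhdE; split=> [xNy z zG | eq_xy z].
  by have := xNy z; rewrite zG => -[? ?]; apply/idP/idP.
by split=> /andP[zG]; rewrite zG ?eq_xy // -eq_xy.
Qed.

Lemma relN1E G x : relN G 1 x <-> {in G, forall z, power_comparable x z}.
Proof.
rewrite relNE; split=> h z zG; first by rewrite -h ?power_comparable1.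
by rewrite h ?power_comparable1.
Qed.

Lemma pg_classN_S G x :
  relN G 1 x -> forall z, pg_classN G x z <-> pg_classS G z.
Proof.
move=> h1x z; rewrite /pg_classS /pg_classN /relN.
by split=> -[zG h]; split=> // w; [rewrite h1x | rewrite -h1x].
Qed.

Lemma mem_cycleX_coprime a k : coprime #[a] k -> a \in <[a ^+ k]>.
Proof. by rewrite -generator_coprime => /eqP <-; exact: cycle_id. Qed.

Lemma maximal_cycleXp a q : prime q -> q %| #[a] -> maximal <[a ^+ q]> <[a]>.
Proof.
move=> q_pr q_dvd; apply: p_index_maximal; first exact: cycleX.
by rewrite -divgS ?cycleX // -!orderE orderXdiv // divnA // mulKn.
Qed.

End PowerGraph.

Section SameClosedNeighbourhood.
Variables (gT : finGroupType) (G : {group gT}) (x y : gT).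
Hypotheses (abelG : abelian G) (xG : x \in G).
Hypotheses (y_in_x : y \in <[x]>) (ne_yx : <[y]> != <[x]>).
Hypothesis sameN : {in G, power_comparable x =1 power_comparable y}.

Let sxG : <[x]> \subset G. Proof. by rewrite cycle_subG. Qed.

Let commG : {in G &, forall a b, commute a b}.
Proof. by move=> a b aG; apply: (centsP abelG). Qed.

Lemma comparable_of_mem_cycle w :
  w \in G -> y \in <[w]> -> power_comparable x w.
Proof. by move=> wG yw; rewrite sameN // /power_comparable yw orbT. Qed.

Lemma x_notin_cycle_y : x \notin <[y]>.
Proof.
by apply: contra ne_yx => xy; rewrite eqEsubset !cycle_subG xy y_in_x.
Qed.

Lemma y_in_cycleXp q : prime q -> q %| #[x] -> y \in <[x ^+ q]>.
Proof.
move=> q_pr q_dvd.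
have /orP[xq_y | //] : power_comparable y (x ^+ q).
  by rewrite -sameN ?groupX // /power_comparable mem_cycle.
have /maxgroupP[_ max_xq] := maximal_cycleXp q_pr q_dvd.
have proper_yx : <[y]> \proper <[x]> by rewrite properEneq ne_yx cycle_subG.
by rewrite -(max_xq _ proper_yx) ?cycle_id ?cycle_subG.
Qed.

Lemma exists_separating_power q : prime q ->
  exists2 u, u \in <[x]> & (y \in <[u ^+ q]>) && (x \notin <[u ^+ q]>).
Proof.
move=> q_pr; have [q_dvd | q_ndvd] := boolP (q %| #[x]).
  exists x; first exact: cycle_id.
  have /maxgroupp/andP[_] := maximal_cycleXp q_pr q_dvd.
  by rewrite cycle_subG y_in_cycleXp.
exists y => //; apply/andP; split.
  apply: mem_cycleX_coprime; apply: coprime_dvdl (order_dvdG y_in_x) _.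
  by rewrite coprime_sym prime_coprime.
by apply: contra x_notin_cycle_y; apply/subsetP; exact: cycleX.
Qed.

Lemma mem_cycle_of_expg_prime u q c :
    u \in <[x]> -> prime q -> y \in <[u ^+ q]> -> x \notin <[u ^+ q]> ->
  c \in G -> c ^+ q = 1 -> c \in <[x]>.
Proof.
move=> ux q_pr y_uq x_nuq cG cq1; apply: contraT => c_nx.
have uG : u \in G := subsetP sxG u ux.
have cu : commute c u by apply: commG.
have y_cu : y \in <[c * u]>.
  by apply: subsetP (cycleX _ q) _ _; rewrite expgMn // cq1 mul1g.
have /orP[cu_x | /cycleP[e xE]] := comparable_of_mem_cycle (groupM cG uG) y_cu.
  by case/negP: c_nx; rewrite -(mulgK u c) groupM ?groupV.
have ntc : c != 1 by apply: contraNneq c_nx => ->; exact: group1.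
have q_dvd_e : q %| e.
  apply: contraR c_nx => q_ndvd_e.
  have ce_x : c ^+ e \in <[x]>.
    rewrite -(mulgK (u ^+ e) (c ^+ e)) -expgMn // -xE.
    by rewrite groupM ?groupV ?groupX ?cycle_id.
  have /mem_cycleX_coprime c_ce : coprime #[c] e.
    by rewrite (nt_prime_order q_pr cq1) ?prime_coprime.
  by apply: subsetP c_ce; rewrite cycle_subG.
case/negP: x_nuq; rewrite xE expgMn // -(divnK q_dvd_e) mulnC !expgM.
by rewrite cq1 expg1n mul1g mem_cycle.
Qed.

Lemma power_comparable_all z : z \in G -> power_comparable x z.
Proof.
have [n] := ubnP #[z]; elim: n z => // n IHn z; rewrite ltnS => le_zn zG.
have [-> | ntz] := eqVneq z 1; first by rewrite /power_comparable group1.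
have q_pr : prime (pdiv #[z]) by rewrite pdiv_prime // order_gt1.
set q := pdiv #[z] in q_pr *.
have IHq : power_comparable x (z ^+ q).
  apply: IHn; last exact: groupX.
  by apply: leq_trans le_zn; rewrite orderXdiv ?pdiv_dvd // ltn_Pdiv ?prime_gt1.
have [y_z | y_nz] := boolP (power_comparable y z); first by rewrite sameN.
have zq_y : z ^+ q \in <[y]>.
  move: IHq; rewrite (sameN (groupX q zG)) => /orP[// | y_zq].
  case/negP: y_nz.
  by rewrite /power_comparable (subsetP (cycleX z q) y y_zq) orbT.
have [u ux /andP[y_uq x_nuq]] := exists_separating_power q_pr.
have /cycleP[t zqE] : z ^+ q \in <[u ^+ q]>.
  by apply: subsetP zq_y; rewrite cycle_subG.
have uG : u \in G := subsetP sxG u ux.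
have c_x : z * (u ^+ t)^-1 \in <[x]>.
  apply: (mem_cycle_of_expg_prime ux q_pr y_uq x_nuq).
    by rewrite groupM ?groupV ?groupX.
  rewrite expgMn; last by apply: commG; rewrite ?groupV ?groupX.
  by rewrite zqE expVgn -!expgM mulnC mulgV.
by rewrite /power_comparable -(mulgKV (u ^+ t) z) groupM ?c_x ?groupX.
Qed.

End SameClosedNeighbourhood.

Lemma cycle_eq_of_power_comparable_eq (gT : finGroupType) (G : {group gT}) x y :
    abelian G -> x \in G -> y \in <[x]> ->
    {in G, power_comparable x =1 power_comparable y} ->
  ~ {in G, forall z, power_comparable x z} -> <[x]> = <[y]>.
Proof.
move=> abelG xG y_in_x sameN notS; apply/eqP; rewrite eq_sym.
by apply: contraT => ne_yx; case: notS; exact: power_comparable_all ne_yx sameN.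
Qed.

Theorem mainTheorem16 (gT : finGroupType) (G : {group gT}) (x y : gT) :
  abelian G -> x \in G -> y \in G ->
  ~ (forall z, pg_classN G x z <-> pg_classS G z) ->
  (relN G x y <-> <[x]> = <[y]>).
Proof.
move=> abelG xG yG notS.
have {}notS : ~ {in G, forall z, power_comparable x z}.
  by move/relN1E/pg_classN_S.
split=> [/relNE sameN | eq_xy]; last first.
  by apply/relNE => z _; apply: power_comparable_cycle.
have /orP[y_in_x | x_in_y] : power_comparable x y.
  by rewrite sameN // /power_comparable cycle_id.
- exact: cycle_eq_of_power_comparable_eq sameN notS.
- apply/esym/(cycle_eq_of_power_comparable_eq abelG yG x_in_y).
    by move=> z zG; rewrite sameN.
  by move=> all_y; apply: notS => z zG; rewrite sameN ?all_y.
Qed.
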